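(* Let $m$ and $n$ be integers with $n > m > 2$, and define the groups \[G=\langle x,y,z \mid z=[y,x],\ x^{2^n}=y^{2^m}=z^4=1,\ z^x=z^{-1},\ z^y=z^{-1}\rangle,\] \[H=\langle a,b,c \mid c=[b,a],\ a^{2^n}=b^{2^m}=c^4=1,\ c^a=c^{-1},\ c^b=c\rangle.\] Then $G$ and $H$ are not isomorphic.
   Context: Commutators are $[g,h]=g^{-1}h^{-1}gh$ and $g^h = h^{-1}gh$. *)

From mathcomp Require Import all_boot all_fingroup.
Set Implicit Arguments.
Unset Strict Implicit.
Unset Printing Implicit Defensive.

From HB Require Import structures.
From mathcomp Require Import all_boot all_fingroup all_algebra ring.
Set Implicit Arguments.
Unset Strict Implicit.
Unset Printing Implicit Defensive.
Import GRing.Theory.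

(* Both presentations are realised on triples (i, j, k) of Z/2^n x Z/2^m x Z/4,
   read as normal forms x^i y^j z^k (resp. a^i b^j c^k); this gives the two
   groups together with their universal properties.  They are told apart by
   generation.  If H were generated by x, y, z satisfying the relations of G,
   then z = [y, x] would be a power of c, and y^(2^m) = 1 with m < n would make
   the a-exponent of y even, so that y centralises c and z^y = z^-1 forces
   z^2 = 1.  If moreover the a-exponent of x is odd, the c-exponent of [y, x] is
   congruent mod 2 to the b-exponent of y, which is then even as well.  Either
   way x, y and z lie in one of the index-2 subgroups cut out by the parities
   of the a- and b-exponents, a contradiction. *)

Local Open Scope ring_scope.

Lemma Zp_cast_pow2 k : ((Zp_trunc (2 ^ k.+1)).+2 = 2 ^ k.+1)%N.
Proof. by rewrite Zp_cast // (ltn_exp2l 0). Qed.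

Definition parity k (i : 'Z_(2 ^ k.+1)) := odd i.

Lemma parity0 k : parity (0 : 'Z_(2 ^ k.+1)) = false. Proof. by []. Qed.
Lemma parity1 k : parity (1 : 'Z_(2 ^ k.+1)) = true. Proof. by []. Qed.

Lemma parityD k (i j : 'Z_(2 ^ k.+1)) : parity (i + j) = parity i (+) parity j.
Proof. by rewrite /parity /= odd_mod ?oddD // Zp_cast_pow2 oddX. Qed.

Lemma parityN k (i : 'Z_(2 ^ k.+1)) : parity (- i) = parity i.
Proof. by rewrite -[parity (- i)]addbF -(parity0 k) -(addNr i) parityD addbA addbb. Qed.

Lemma parity_mulrn_pow2 k l (i : 'Z_(2 ^ k.+1)) :
  (l <= k)%N -> i *+ 2 ^ l = 0 -> parity i = false.
Proof.
move=> le_lk /(congr1 val) /eqP; rewrite Zp_mulrn /= -/(dvdn _ _).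
rewrite [X in (X %| _)%N]Zp_cast_pow2 => dvd_i; apply/negbTE.
rewrite -dvdn2 -(dvdn_pmul2r (expn_gt0 2 l)) -expnS.
by apply: dvdn_trans dvd_i; rewrite dvdn_exp2l.
Qed.

Definition Zp_to_Z4 k (j : 'Z_(2 ^ k.+2)) : 'Z_4 := j%:R.

Lemma Zp_to_Z4D k (i j : 'Z_(2 ^ k.+2)) : Zp_to_Z4 (i + j) = Zp_to_Z4 i + Zp_to_Z4 j.
Proof.
have dvd4 : (4 %| (Zp_trunc (2 ^ k.+2)).+2)%N.
  by rewrite Zp_cast_pow2 !expnS mulnA dvdn_mulr.
by rewrite /Zp_to_Z4 -natrD -[LHS]natr_Zp -[RHS]natr_Zp /= !val_Zp_nat // modn_dvdm.
Qed.

Lemma Zp_to_Z4N k (j : 'Z_(2 ^ k.+2)) : Zp_to_Z4 (- j) = - Zp_to_Z4 j.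
Proof. by apply/eqP; rewrite -subr_eq0 opprK -Zp_to_Z4D addNr. Qed.

Lemma Zp_to_Z4_double_eq0 k (j : 'Z_(2 ^ k.+2)) :
  Zp_to_Z4 j *+ 2 = 0 -> parity j = false.
Proof.
rewrite /parity -(odd_mod _ (erefl : odd 4 = false)) -val_Zp_nat // -/(Zp_to_Z4 j).
by case: (Zp_to_Z4 j) => [[|[|[|[|?]]]] //=] ? /(congr1 val).
Qed.

Section ZpExponent.
Local Open Scope group_scope.
Variables (gT : finGroupType) (p : nat) (x : gT).
Hypotheses (p_gt1 : (1 < p)%N) (xp : x ^+ p = 1).

Lemma expg_ZpD (i j : 'Z_p) : x ^+ (i + j)%R = x ^+ i * x ^+ j.
Proof. by rewrite /= expg_mod ?expgD // Zp_cast. Qed.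

Lemma expg_ZpDA (i j : 'Z_p) w : x ^+ i * (x ^+ j * w) = x ^+ (i + j)%R * w.
Proof. by rewrite mulgA expg_ZpD. Qed.

Lemma expg_ZpN (i : 'Z_p) : x ^+ (- i)%R = (x ^+ i)^-1.
Proof. by apply: (mulIg (x ^+ i)); rewrite -expg_ZpD addNr mulVg. Qed.

End ZpExponent.

Section Inverting.
Local Open Scope group_scope.
Variables (gT : finGroupType) (z w : gT).
Hypothesis zw : z ^ w = z^-1.

Lemma conjg_expg_inverting t : z ^ (w ^+ t) = if odd t then z^-1 else z.
Proof.
elim: t => [|t IH]; first by rewrite conjg1.
by rewrite expgSr conjgM IH /=; case: (odd t); rewrite /= ?conjVg zw ?invgK.
Qed.

Lemma expg_mul_inverting j : (w * z) ^+ j = w ^+ j * z ^+ odd j.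
Proof.
have zwz : z * w * z = w by rewrite (conjgC z w) zw mulgKV.
elim: j => [|j IH]; first by rewrite !expg0 mulg1.
rewrite expgSr IH expgSr /=.
by case: (odd j); rewrite /= ?mulg1 -!mulgA ?(mulgA z w z) ?zwz.
Qed.

Lemma mulg_expZ4_inverting (k : 'Z_4) t : z ^+ 4 = 1 ->
  z ^+ k * w ^+ t = w ^+ t * z ^+ (k * (-1) ^+ odd t)%R.
Proof.
move=> z4; rewrite conjgC conjXg conjg_expg_inverting.
by case: (odd t); rewrite ?expr0 ?mulr1 // expr1 mulrN1 expg_ZpN // expgVn.
Qed.

End Inverting.

Section Generation.
Local Open Scope group_scope.

Lemma joing3_eq_setT (gT : finGroupType) (u v w : gT) :
    (forall g, exists i j k, g = u ^+ i * (v ^+ j * w ^+ k)) ->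
  <[u]> <*> <[v]> <*> <[w]> = [set: gT].
Proof.
move=> normal_form; apply/eqP; rewrite eqEsubset subsetT; apply/subsetP => g _.
have [i [j [k ->]]] := normal_form g.
have := subxx (<[u]> <*> <[v]> <*> <[w]>).
rewrite {1}join_subG [X in X && _]join_subG !cycle_subG => /andP[/andP[uJ vJ] wJ].
by rewrite !groupM ?groupX.
Qed.

Lemma homg_joing3 (aT rT : finGroupType) (f : aT -> rT) (u v w : aT) :
    {morph f : g h / g * h} -> <[u]> <*> <[v]> <*> <[w]> = [set: aT] ->
  <[f u]> <*> <[f v]> <*> <[f w]> \homg [set: aT].
Proof.
move=> fM gen_uvw; apply/homgP; exists (@Morphism _ _ [set: aT] f (in2W fM)).
by rewrite -gen_uvw !morphimY ?morphim_cycle ?inE //= gen_uvw ?subsetT.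
Qed.

End Generation.

Section ModelG.
Variables n m : nat.

Definition Gmodel : Type := ('Z_(2 ^ n.+1) * 'Z_(2 ^ m.+1) * 'Z_4)%type.
HB.instance Definition _ := Finite.copy Gmodel ('Z_(2 ^ n.+1) * 'Z_(2 ^ m.+1) * 'Z_4)%type.

(* (i, j, k) stands for x^i y^j z^k: moving z^k past x^i' y^j' multiplies its
   exponent by (-1)^(i' + j'), and y^j x^i' = x^i' y^j z^e with e = 1 iff i'
   and j are both odd, after which z^e crosses y^j'. *)
Definition Gmodel_mul (g h : Gmodel) : Gmodel :=
  let: (i, j, k) := g in let: (i', j', k') := h in
  (i + i', j + j',
   (if parity i' && parity j then (-1) ^+ parity j' else 0)
     + k * (-1) ^+ (parity i' (+) parity j') + k').

Definition Gmodel_inv (g : Gmodel) : Gmodel :=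
  let: (i, j, k) := g in
  (- i, - j,
   - (k + (if parity i && parity j then (-1) ^+ parity j else 0))
     * (-1) ^+ (parity i (+) parity j)).

Lemma Gmodel_mulA : associative Gmodel_mul.
Proof.
move=> [[i1 j1] k1] [[i2 j2] k2] [[i3 j3] k3]; rewrite /Gmodel_mul !parityD !addrA.
congr (_, _, _).
by case: (parity i2); case: (parity i3); case: (parity j1); case: (parity j2);
  case: (parity j3) => /=; ring.
Qed.

Lemma Gmodel_mul1 : left_id (0, 0, 0) Gmodel_mul.
Proof. by move=> [[i j] k]; rewrite /Gmodel_mul parity0 andbF mul0r !add0r. Qed.

Lemma Gmodel_mulV : left_inverse (0, 0, 0) Gmodel_inv Gmodel_mul.
Proof.
move=> [[i j] k]; rewrite /Gmodel_mul /Gmodel_inv parityN !addNr.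
by congr (_, _, _); case: (parity i); case: (parity j) => /=; ring.
Qed.

HB.instance Definition _ := Finite_isGroup.Build Gmodel Gmodel_mulA Gmodel_mul1 Gmodel_mulV.

End ModelG.

Section ModelGPresentation.
Variables n m : nat.
Local Notation G := (Gmodel n m).
Local Open Scope group_scope.

Lemma Gmodel_mulE (g h : G) : g * h = Gmodel_mul g h. Proof. by []. Qed.
Lemma Gmodel_invE (g : G) : g^-1 = Gmodel_inv g. Proof. by []. Qed.

Definition gx : G := (1, 0, 0)%R.
Definition gy : G := (0, 1, 0)%R.
Definition gz : G := (0, 0, 1)%R.

Ltac Gmodel_simpl :=
  rewrite ?Gmodel_mulE /Gmodel_mul /gx /gy /gz /=
          ?(oppr0, addNr, parityN, parity0, parity1, andbF, andbT,
            mul0r, mul1r, mulr1, addr0, add0r, expr0, expr1).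

Lemma gx_expg t : gx ^+ t = (t%:R, 0, 0)%R.
Proof. by elim: t => // t IH; rewrite expgSr IH; Gmodel_simpl; rewrite natr1. Qed.

Lemma gy_expg t : gy ^+ t = (0, t%:R, 0)%R.
Proof. by elim: t => // t IH; rewrite expgSr IH; Gmodel_simpl; rewrite natr1. Qed.

Lemma gz_expg t : gz ^+ t = (0, 0, t%:R)%R.
Proof. by elim: t => // t IH; rewrite expgSr IH; Gmodel_simpl; rewrite natr1. Qed.

Lemma Gmodel_generated : <[gx]> <*> <[gy]> <*> <[gz]> = [set: G].
Proof.
apply: joing3_eq_setT => -[[i j] k]; exists i, j, k.
by rewrite gx_expg gy_expg gz_expg; Gmodel_simpl; rewrite !natr_Zp.
Qed.

Lemma Gmodel_orders : [/\ gx ^+ (2 ^ n.+1) = 1, gy ^+ (2 ^ m.+1) = 1 & gz ^+ 4 = 1].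
Proof. by rewrite gx_expg gy_expg gz_expg !pchar_Zp ?(ltn_exp2l 0). Qed.

Lemma Gmodel_commutations : [/\ gz = [~ gy, gx], gz ^ gx = gz^-1 & gz ^ gy = gz^-1].
Proof. by split; rewrite /commg /conjg !Gmodel_invE /Gmodel_inv; Gmodel_simpl. Qed.

Lemma Gmodel_homg :
  [set: G] \homg Grp (x : y : z : (z = [~ y, x], x ^+ (2 ^ n.+1) = 1, y ^+ (2 ^ m.+1) = 1,
                                  z ^+ 4 = 1, z ^ x = z^-1, z ^ y = z^-1)).
Proof.
have [[r2 r3 r4] [r1 r5 r6]] := (Gmodel_orders, Gmodel_commutations).
move: gx gy gz Gmodel_generated r1 r2 r3 r4 r5 r6 => x y z gen r1 r2 r3 r4 r5 r6.
by apply/existsP; exists (x, y, z); rewrite /= !xpair_eqE gen -r1 r2 r3 r4 r5 r6 !eqxx.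
Qed.

End ModelGPresentation.

Section ModelGUniversal.
Local Open Scope group_scope.
Variables (n m : nat) (rT : finGroupType) (x y z : rT).
Hypotheses (r1 : z = [~ y, x]) (r2 : x ^+ (2 ^ n.+1) = 1) (r3 : y ^+ (2 ^ m.+1) = 1)
  (r4 : z ^+ 4 = 1) (r5 : z ^ x = z^-1) (r6 : z ^ y = z^-1).

Lemma mulg_expg_yx j t :
  y ^+ j * x ^+ t = x ^+ t * (y ^+ j * z ^+ ((odd t && odd j)%:R : 'Z_4)).
Proof.
have yx : y ^ x = y * z by rewrite r1 commgEl mulKVg.
rewrite conjgC; congr (_ * _).
suff -> : (y ^+ j) ^ (x ^+ t) = y ^+ j * z ^+ (odd t && odd j) by case: (_ && _).
elim: t => [|t IH]; first by rewrite conjg1 mulg1.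
rewrite expgSr conjgM IH conjMg conjXg yx expg_mul_inverting //=.
by case: (odd t); case: (odd j); rewrite /= ?conj1g ?r5 ?mulg1 ?mulgK.
Qed.

Definition Gmodel_eval (g : Gmodel n m) : rT :=
  let: (i, j, k) := g in x ^+ i * (y ^+ j * z ^+ k).

Lemma Gmodel_eval_morph : {morph Gmodel_eval : g h / g * h}.
Proof.
have x_gt1 : (1 < 2 ^ n.+1)%N by rewrite (ltn_exp2l 0).
have y_gt1 : (1 < 2 ^ m.+1)%N by rewrite (ltn_exp2l 0).
move=> [[i j] k] [[i' j'] k']; rewrite /Gmodel_eval Gmodel_mulE /Gmodel_mul; cbv beta iota.
have -> : x ^+ i * (y ^+ j * z ^+ k) * (x ^+ i' * (y ^+ j' * z ^+ k')) =
          x ^+ i * (y ^+ j * (z ^+ k * (x ^+ i' * (y ^+ j' * z ^+ k')))).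
  by rewrite !mulgA.
have -> : z ^+ k * (x ^+ i' * (y ^+ j' * z ^+ k')) =
          x ^+ i' * (z ^+ (k * (-1) ^+ odd i')%R * (y ^+ j' * z ^+ k')).
  by rewrite mulgA mulg_expZ4_inverting // -mulgA.
have -> : y ^+ j * (x ^+ i' * (z ^+ (k * (-1) ^+ odd i')%R * (y ^+ j' * z ^+ k'))) =
          x ^+ i' * (y ^+ j * (z ^+ ((odd i' && odd j)%:R + k * (-1) ^+ odd i')%R *
                                (y ^+ j' * z ^+ k'))).
  by rewrite mulgA mulg_expg_yx -!mulgA (expg_ZpDA _ r4).
have -> (l : 'Z_4) : z ^+ l * (y ^+ j' * z ^+ k') = y ^+ j' * z ^+ (l * (-1) ^+ odd j' + k')%R.
  by rewrite mulgA mulg_expZ4_inverting // -mulgA -expg_ZpD.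
rewrite (expg_ZpDA x_gt1 r2) (expg_ZpDA y_gt1 r3); congr (_ * (_ * z ^+ nat_of_ord _)).
rewrite -/(parity i') -/(parity j) -/(parity j').
by case: (parity i'); case: (parity j); case: (parity j') => /=; ring.
Qed.

End ModelGUniversal.

Lemma Gmodel_isog n m :
  ([set: Gmodel n m] \isog Grp (x : y : z : (z = [~ y, x], x ^+ (2 ^ n.+1) = 1,
                      y ^+ (2 ^ m.+1) = 1, z ^+ 4 = 1, z ^ x = z^-1, z ^ y = z^-1)))%g.
Proof.
apply: intro_isoGrp => [|rT K]; first exact: Gmodel_homg.
case/existsP => -[[x y] z] /= /eqP[<- r1 r2 r3 r4 r5 r6].
have /= := homg_joing3 (Gmodel_eval_morph r1 r2 r3 r4 r5 r6) (Gmodel_generated n m).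
by rewrite /gx /gy /gz /= !expg1 !expg0 !mulg1 !mul1g.
Qed.

Section ModelH.
Variables n m : nat.

Definition Hmodel : Type := ('Z_(2 ^ n.+1) * 'Z_(2 ^ m.+2) * 'Z_4)%type.
HB.instance Definition _ := Finite.copy Hmodel ('Z_(2 ^ n.+1) * 'Z_(2 ^ m.+2) * 'Z_4)%type.

(* (i, j, k) stands for a^i b^j c^k: a inverts c, b centralises it, and
   b^j a^i' = a^i' b^j c^j when i' is odd. *)
Definition Hmodel_mul (g h : Hmodel) : Hmodel :=
  let: (i, j, k) := g in let: (i', j', k') := h in
  (i + i', j + j', (if parity i' then Zp_to_Z4 j else 0) + k * (-1) ^+ parity i' + k').

Definition Hmodel_inv (g : Hmodel) : Hmodel :=
  let: (i, j, k) := g in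
  (- i, - j, ((if parity i then Zp_to_Z4 j else 0) - k) * (-1) ^+ parity i).

Lemma Hmodel_mulA : associative Hmodel_mul.
Proof.
move=> [[i1 j1] k1] [[i2 j2] k2] [[i3 j3] k3]; rewrite /Hmodel_mul parityD Zp_to_Z4D !addrA.
by congr (_, _, _); case: (parity i2); case: (parity i3) => /=; ring.
Qed.

Lemma Hmodel_mul1 : left_id (0, 0, 0) Hmodel_mul.
Proof. by move=> [[i j] k]; rewrite /Hmodel_mul mul0r if_same !add0r. Qed.

Lemma Hmodel_mulV : left_inverse (0, 0, 0) Hmodel_inv Hmodel_mul.
Proof.
move=> [[i j] k]; rewrite /Hmodel_mul /Hmodel_inv Zp_to_Z4N !addNr.
by congr (_, _, _); case: (parity i) => /=; ring.
Qed.

HB.instance Definition _ := Finite_isGroup.Build Hmodel Hmodel_mulA Hmodel_mul1 Hmodel_mulV.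

End ModelH.

Section ModelHPresentation.
Variables n m : nat.
Local Notation H := (Hmodel n m).
Local Open Scope group_scope.

Lemma Hmodel_mulE (g h : H) : g * h = Hmodel_mul g h. Proof. by []. Qed.
Lemma Hmodel_invE (g : H) : g^-1 = Hmodel_inv g. Proof. by []. Qed.

Definition ha : H := (1, 0, 0)%R.
Definition hb : H := (0, 1, 0)%R.
Definition hc : H := (0, 0, 1)%R.

Ltac Hmodel_simpl :=
  rewrite ?Hmodel_mulE /Hmodel_mul /ha /hb /hc /=
          ?(oppr0, addNr, parityN, parity0, parity1, Zp_to_Z4N,
            mul0r, mul1r, mulr1, addr0, add0r, expr0, expr1).

Lemma ha_expg t : ha ^+ t = (t%:R, 0, 0)%R.
Proof. by elim: t => // t IH; rewrite expgSr IH; Hmodel_simpl; rewrite natr1. Qed.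

Lemma hb_expg t : hb ^+ t = (0, t%:R, 0)%R.
Proof. by elim: t => // t IH; rewrite expgSr IH; Hmodel_simpl; rewrite natr1. Qed.

Lemma hc_expg t : hc ^+ t = (0, 0, t%:R)%R.
Proof. by elim: t => // t IH; rewrite expgSr IH; Hmodel_simpl; rewrite natr1. Qed.

Lemma Hmodel_generated : <[ha]> <*> <[hb]> <*> <[hc]> = [set: H].
Proof.
apply: joing3_eq_setT => -[[i j] k]; exists i, j, k.
by rewrite ha_expg hb_expg hc_expg; Hmodel_simpl; rewrite !natr_Zp.
Qed.

Lemma Hmodel_orders : [/\ ha ^+ (2 ^ n.+1) = 1, hb ^+ (2 ^ m.+2) = 1 & hc ^+ 4 = 1].
Proof. by rewrite ha_expg hb_expg hc_expg !pchar_Zp ?(ltn_exp2l 0). Qed.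

Lemma Hmodel_commutations : [/\ hc = [~ hb, ha], hc ^ ha = hc^-1 & hc ^ hb = hc].
Proof. by split; rewrite /commg /conjg !Hmodel_invE /Hmodel_inv; Hmodel_simpl. Qed.

Lemma Hmodel_homg :
  [set: H] \homg Grp (a : b : c : (c = [~ b, a], a ^+ (2 ^ n.+1) = 1, b ^+ (2 ^ m.+2) = 1,
                                  c ^+ 4 = 1, c ^ a = c^-1, c ^ b = c)).
Proof.
have [[r2 r3 r4] [r1 r5 r6]] := (Hmodel_orders, Hmodel_commutations).
move: ha hb hc Hmodel_generated r1 r2 r3 r4 r5 r6 => a b c gen r1 r2 r3 r4 r5 r6.
by apply/existsP; exists (a, b, c); rewrite /= !xpair_eqE gen -r1 r2 r3 r4 r5 r6 !eqxx.
Qed.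

End ModelHPresentation.

Section ModelHUniversal.
Local Open Scope group_scope.
Variables (n m : nat) (rT : finGroupType) (a b c : rT).
Hypotheses (r1 : c = [~ b, a]) (r2 : a ^+ (2 ^ n.+1) = 1) (r3 : b ^+ (2 ^ m.+2) = 1)
  (r4 : c ^+ 4 = 1) (r5 : c ^ a = c^-1) (r6 : c ^ b = c).

Lemma commute_cb : commute c b.
Proof. by rewrite /commute conjgC r6. Qed.

Lemma mulg_expg_ba (j : 'Z_(2 ^ m.+2)) t :
  b ^+ j * a ^+ t = a ^+ t * (b ^+ j * c ^+ (if odd t then Zp_to_Z4 j else 0%R)).
Proof.
have ba : b ^ a = b * c by rewrite r1 commgEl mulKVg.
rewrite conjgC; congr (_ * _).
suff -> : (b ^+ j) ^ (a ^+ t) = b ^+ j * (if odd t then c ^+ j else 1).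
  by case: (odd t); rewrite // /Zp_to_Z4 val_Zp_nat // expg_mod.
elim: t => [|t IH]; first by rewrite conjg1 mulg1.
rewrite expgSr conjgM IH conjMg conjXg ba (expgMn _ (esym commute_cb)) /=.
by case: (odd t); rewrite /= ?conj1g ?conjXg ?r5 ?expVgn ?mulg1 ?mulgK.
Qed.

Definition Hmodel_eval (g : Hmodel n m) : rT :=
  let: (i, j, k) := g in a ^+ i * (b ^+ j * c ^+ k).

Lemma Hmodel_eval_morph : {morph Hmodel_eval : g h / g * h}.
Proof.
have a_gt1 : (1 < 2 ^ n.+1)%N by rewrite (ltn_exp2l 0).
have b_gt1 : (1 < 2 ^ m.+2)%N by rewrite (ltn_exp2l 0).
move=> [[i j] k] [[i' j'] k']; rewrite /Hmodel_eval Hmodel_mulE /Hmodel_mul; cbv beta iota.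
have -> : a ^+ i * (b ^+ j * c ^+ k) * (a ^+ i' * (b ^+ j' * c ^+ k')) =
          a ^+ i * (b ^+ j * (c ^+ k * (a ^+ i' * (b ^+ j' * c ^+ k')))).
  by rewrite !mulgA.
have -> : c ^+ k * (a ^+ i' * (b ^+ j' * c ^+ k')) =
          a ^+ i' * (c ^+ (k * (-1) ^+ odd i')%R * (b ^+ j' * c ^+ k')).
  by rewrite mulgA mulg_expZ4_inverting // -mulgA.
have -> : b ^+ j * (a ^+ i' * (c ^+ (k * (-1) ^+ odd i')%R * (b ^+ j' * c ^+ k'))) =
          a ^+ i' * (b ^+ j * (c ^+ ((if odd i' then Zp_to_Z4 j else 0) + k * (-1) ^+ odd i')%R
                                 * (b ^+ j' * c ^+ k'))).
  by rewrite mulgA mulg_expg_ba -!mulgA (expg_ZpDA _ r4).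
have -> (l : 'Z_4) : c ^+ l * (b ^+ j' * c ^+ k') = b ^+ j' * c ^+ (l + k')%R.
  by rewrite (expg_ZpD _ r4) // !mulgA (commuteX2 _ _ commute_cb).
rewrite (expg_ZpDA a_gt1 r2) (expg_ZpDA b_gt1 r3).
by congr (_ * (_ * c ^+ nat_of_ord _)); rewrite -/(parity i'); case: (parity i') => /=; ring.
Qed.

End ModelHUniversal.

Lemma Hmodel_isog n m :
  ([set: Hmodel n m] \isog Grp (a : b : c : (c = [~ b, a], a ^+ (2 ^ n.+1) = 1,
                      b ^+ (2 ^ m.+2) = 1, c ^+ 4 = 1, c ^ a = c^-1, c ^ b = c)))%g.
Proof.
apply: intro_isoGrp => [|rT K]; first exact: Hmodel_homg.
case/existsP => -[[a b] c] /= /eqP[<- r1 r2 r3 r4 r5 r6].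
have /= := homg_joing3 (Hmodel_eval_morph r1 r2 r3 r4 r5 r6) (Hmodel_generated n m).
by rewrite /ha /hb /hc /= !expg1 !expg0 !mulg1 !mul1g.
Qed.

Section ModelHParity.
Variables n m : nat.
Local Notation H := (Hmodel n m).
Local Open Scope group_scope.

Lemma Hmodel_expg_a (g : H) t : (g ^+ t).1.1 = (g.1.1 *+ t)%R.
Proof.
elim: t => [|t IH]; first by rewrite mulr0n.
by rewrite expgSr mulrSr -IH; case: (g ^+ t) => [[? ?] ?]; case: g {IH} => [[? ?] ?].
Qed.

(* For (u, v) <> (false, false) these are the three subgroups of index 2. *)
Definition parity_kernel (u v : bool) : {set H} :=
  [set g | (u && parity g.1.1) (+) (v && parity g.1.2) == false].

Lemma parity_kernel_group u v : group_set (parity_kernel u v).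
Proof.
apply/group_setP; split; first by rewrite inE !andbF.
move=> [[i j] k] [[i' j'] k']; rewrite !inE Hmodel_mulE /= !parityD.
by case: u; case: v; case: (parity i); case: (parity i'); case: (parity j); case: (parity j').
Qed.

Lemma Hmodel_commg_in_c (x y : H) : [~ y, x] = (0, 0, [~ y, x].2)%R.
Proof.
move: (commgC y x); move: [~ y, x] => [[iz jz] kz].
case: x => [[ix jx] kx]; case: y => [[iy jy] ky].
rewrite !Hmodel_mulE /Hmodel_mul => /eqP.
rewrite !xpair_eqE => /andP[/andP[/eqP e1 /eqP e2] _].
congr (_, _, _); apply/esym.
  by apply: (addrI (ix + iy)%R); rewrite addr0 -e1 addrC.
by apply: (addrI (jx + jy)%R); rewrite addr0 -e2 addrC.
Qed.

Lemma Hmodel_commg_c (x y : H) : parity x.1.1 -> parity y.1.1 = false ->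
  ([~ y, x].2 *+ 2 = Zp_to_Z4 y.1.2 *+ 2)%R.
Proof.
rewrite [[~ y, x]]Hmodel_commg_in_c; move: (commgC y x).
rewrite [[~ y, x]]Hmodel_commg_in_c; move: [~ y, x].2 => kz.
case: x => [[ix jx] kx]; case: y => [[iy jy] ky] /=; rewrite !Hmodel_mulE /Hmodel_mul.
move=> /eqP; rewrite !xpair_eqE => /andP[_ /eqP e3] ix_odd iy_even.
rewrite ix_odd iy_even parity0 expr0 expr1 !mulr1 !add0r in e3.
have ky4 : (ky *+ 4 = 0)%R by rewrite -mulr_natr pchar_Zp ?mulr0.
have -> : kz = (Zp_to_Z4 jy + ky * -1 + kx - (kx + ky))%R.
  by rewrite e3 [_ + kz]addrC addrK.
by rewrite -[RHS]subr0 -ky4; ring.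
Qed.

Lemma Hmodel_commute_c (g : H) (k : 'Z_4) :
  parity g.1.1 = false -> commute ((0, 0, k)%R : H) g.
Proof.
case: g => [[i j] l] /= i_even; rewrite /commute !Hmodel_mulE /Hmodel_mul i_even parity0.
by rewrite expr0 !mulr1 !add0r !addr0 addrC.
Qed.

Hypothesis lt_mn : (m.+1 < n)%N.

Lemma Hmodel_not_generated_by_G_relators (x y z : H) :
    <[x]> <*> <[y]> <*> <[z]> = [set: H] -> z = [~ y, x] ->
  y ^+ (2 ^ m.+2) = 1 -> z ^ y = z^-1 -> False.
Proof.
move=> gen defz y_order zy.
have kernel_full u v : x \in parity_kernel u v -> y \in parity_kernel u v ->
    z \in parity_kernel u v -> forall g, g \in parity_kernel u v.
  move=> xK yK zK g; have /subsetP : [set: H] \subset Group (parity_kernel_group u v).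
    by rewrite -gen !join_subG !cycle_subG xK yK zK.
  by apply; rewrite inE.
have ya_even : parity y.1.1 = false.
  by apply: (@parity_mulrn_pow2 _ m.+2); rewrite // -Hmodel_expg_a y_order.
have z_c : z = (0, 0, z.2)%R by rewrite defz {1}Hmodel_commg_in_c.
have z2 : (z.2 *+ 2 = 0)%R.
  have /eqP : z * z = 1.
    by rewrite -{1}(invgK z) -zy conjgE z_c (Hmodel_commute_c _ ya_even) mulKg mulVg.
  rewrite {1 2}z_c Hmodel_mulE /Hmodel_mul !xpair_eqE => /andP[_ /eqP].
  by rewrite parity0 expr0 mulr1 add0r mulr2n.
case: (boolP (parity x.1.1)) => [xa_odd | /negbTE xa_even].
  have yb_even : parity y.1.2 = false.
    by apply: Zp_to_Z4_double_eq0; rewrite -(Hmodel_commg_c xa_odd ya_even) -defz z2.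
  have := kernel_full (parity x.1.2) true _ _ _ (hb n m).
  rewrite !inE xa_odd ya_even yb_even z_c !parity0 parity1 /= !andbF andbT addbb.
  by move/(_ isT isT isT).
have := kernel_full true false _ _ _ (ha n m).
by rewrite !inE xa_even ya_even z_c !parity0 parity1 /= => /(_ isT isT isT).
Qed.

End ModelHParity.

Local Close Scope ring_scope.
Local Open Scope group_scope.

Theorem lemma7p3 (m n : nat) (h2m : 2 < m) (hmn : m < n) :
  (exists (gT : finGroupType) (G : {group gT}),
     G \isog Grp (x : y : z : (z = [~ y, x], x ^+ (2 ^ n) = 1, y ^+ (2 ^ m) = 1,
                               z ^+ 4 = 1, z ^ x = z^-1, z ^ y = z^-1))) /\
  (exists (gT : finGroupType) (H : {group gT}),
     H \isog Grp (a : b : c : (c = [~ b, a], a ^+ (2 ^ n) = 1, b ^+ (2 ^ m) = 1,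
                               c ^+ 4 = 1, c ^ a = c^-1, c ^ b = c))) /\
  (forall (gT : finGroupType) (K : {group gT}),
     K \isog Grp (x : y : z : (z = [~ y, x], x ^+ (2 ^ n) = 1, y ^+ (2 ^ m) = 1,
                               z ^+ 4 = 1, z ^ x = z^-1, z ^ y = z^-1)) ->
     ~ K \isog Grp (a : b : c : (c = [~ b, a], a ^+ (2 ^ n) = 1, b ^+ (2 ^ m) = 1,
                                 c ^+ 4 = 1, c ^ a = c^-1, c ^ b = c))).
Proof.
have [n' def_n] : exists n', n = n'.+1 by case: n hmn => [|n']; last exists n'.
have [m' def_m] : exists m', m = m'.+3 by case: m h2m {hmn} => [|[|[|m']]]; last exists m'.
subst n m; split; [|split].
- by exists (Gmodel n' m'.+2), [set: Gmodel n' m'.+2]%G; apply: Gmodel_isog.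
- by exists (Hmodel n' m'.+1), [set: Hmodel n' m'.+1]%G; apply: Hmodel_isog.
move=> gT K isoG isoH.
have : [set: Hmodel n' m'.+1]%G \homg K by rewrite isoH; apply: isoGrp_hom (Hmodel_isog _ _).
rewrite isoG => /existsP[[[x y] z]] /= /eqP[gen r1 _ r3 _ _ r6].
exact: (@Hmodel_not_generated_by_G_relators n' m'.+1 hmn _ _ _ gen r1 r3 r6).
Qed.
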